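(* For every integer $n\geq 2$, $\dot{\imath}_{[1,2]}(P_2\Box P_n)=\left\lfloor \frac{n+2}{2}\right\rfloor$.
   Context: $P_k$ denotes the path on $k$ vertices and $P_m\Box P_n$ the Cartesian product of two paths (the $m\times n$ grid graph). A set $S$ of vertices of a graph $G$ is independent if no two vertices of $S$ are adjacent, and dominating if every vertex not in $S$ has at least one neighbor in $S$. An independent $[1,2]$-set of $G$ is an independent dominating set $S$ such that every vertex $v\in V(G)\setminus S$ has at least one and at most two neighbors in $S$. When $G$ has an independent $[1,2]$-set, $\dot{\imath}_{[1,2]}(G)$ denotes the minimum cardinality of an independent $[1,2]$-set of $G$ (the statement includes the existence of such a set). *)

From mathcomp Require Import all_boot.
Set Implicit Arguments. Unset Strict Implicit. Unset Printing Implicit Defensive.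

Definition path_adj (k : nat) (i j : 'I_k) : bool :=
  (i.+1 == j :> nat) || (j.+1 == i :> nat).

Definition grid_adj (m n : nat) (u v : 'I_m * 'I_n) : bool :=
  ((u.1 == v.1) && path_adj u.2 v.2) || (path_adj u.1 v.1 && (u.2 == v.2)).

Section Graph.
Variables (T : finType) (adj : rel T).

Definition nbrs_in (S : {set T}) (v : T) : nat := #|[set u in S | adj v u]|.

Definition independent (S : {set T}) : bool :=
  [forall u in S, forall v in S, ~~ adj u v].

Definition dominating (S : {set T}) : bool :=
  [forall v, (v \notin S) ==> (0 < nbrs_in S v)].

Definition indep12 (S : {set T}) : bool :=
  [&& independent S, dominating S &
      [forall v, (v \notin S) ==> (0 < nbrs_in S v <= 2)]].

Definition indep12_number_is (k : nat) : Prop :=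
  (exists S : {set T}, indep12 S /\ #|S| = k) /\
  (forall S : {set T}, indep12 S -> k <= #|S|).
End Graph.

From mathcomp Require Import all_boot zify.

(* An independent set of the 2 x n grid meets each column at most once. If a
   column j is missed by an independent dominating set S, then its two
   vertices are dominated from two different rows by vertices of S lying in
   distinct neighbouring columns, so j is an interior column and both j - 1
   and j + 1 are met. Hence column 0 is met, and j |-> j + 1 injects the
   missed columns into the met columns other than 0, so 2 |S| >= n + 1.
   Conversely, the zigzag that takes every even column, with alternating
   rows, together with the last column, is an independent [1,2]-set of size
   floor((n + 2) / 2): two of its vertices in the same row are never two
   columns apart, so no vertex has three neighbours in it. *)

Section IndependentDominating.
Variables (T : finType) (adj : rel T).

Lemma independentP (S : {set T}) :
  reflect {in S &, forall u v, ~~ adj u v} (independent adj S).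
Proof.
apply: (iffP forall_inP) => [indS u v uS vS | indS u uS].
  exact: forall_inP (indS u uS) v vS.
by apply/forall_inP => v vS; apply: indS.
Qed.

Lemma dominatingP (S : {set T}) :
  reflect (forall v, v \notin S -> exists2 u, u \in S & adj v u)
          (dominating adj S).
Proof.
apply: (iffP forallP) => domS v.
  move=> vS; have /card_gt0P [u] := implyP (domS v) vS.
  by rewrite inE => /andP [uS vu]; exists u.
by apply/implyP => /domS [u uS vu]; apply/card_gt0P; exists u; rewrite inE uS.
Qed.

Lemma indep12_intro (S : {set T}) :
  independent adj S -> dominating adj S ->
  (forall v, v \notin S -> nbrs_in adj S v <= 2) -> indep12 adj S.
Proof.
move=> indS domS le2S; apply/and3P; split=> //; apply/forallP => v.
apply/implyP => vS; rewrite le2S // andbT.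
have [u uS vu] := dominatingP _ domS v vS.
by apply/card_gt0P; exists u; rewrite inE uS.
Qed.

End IndependentDominating.

Lemma grid_adjE m n (u v : 'I_m * 'I_n) : grid_adj u v =
  ((u.1 == v.1 :> nat) && ((u.2.+1 == v.2 :> nat) || (v.2.+1 == u.2 :> nat))) ||
  (((u.1.+1 == v.1 :> nat) || (v.1.+1 == u.1 :> nat)) && (u.2 == v.2 :> nat)).
Proof. by []. Qed.

Lemma card_grid2_columns n (S : {set 'I_2 * 'I_n}) :
  independent (@grid_adj 2 _) S -> #|[set u.2 | u in S]| = #|S|.
Proof.
move/independentP=> indS; apply: card_in_imset => -[r j] [r' j'] uS wS /= eq_j.
subst j'; have := indS _ _ uS wS; rewrite grid_adjE /=.
have := ltn_ord r; have := ltn_ord r' => lt_r' lt_r nadj.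
by congr pair; apply: ord_inj; lia.
Qed.

Lemma missed_column_gap n (S : {set 'I_2 * 'I_n.+1}) (j : 'I_n.+1) :
  independent (@grid_adj 2 _) S -> dominating (@grid_adj 2 _) S ->
  j \notin [set u.2 | u in S] ->
  0 < j < n /\ inord j.+1 \in [set u.2 | u in S].
Proof.
move=> /independentP indS /dominatingP domS jS.
have off_j u : u \in S -> u.2 != j.
  by move=> uS; apply: contraNneq jS => <-; apply: imset_f.
have dom_j r : exists2 u, u \in S & grid_adj (r, j) u.
  by apply: domS; apply: contra jS => rjS; apply/imsetP; exists (r, j).
have [[r j1] uS dom_u] := dom_j ord0; have [[r' j2] wS dom_w] := dom_j ord_max.
have := indS _ _ uS wS; move: dom_u dom_w (off_j _ uS) (off_j _ wS).
rewrite !grid_adjE /= => dom_u dom_w off_u off_w nadj.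
have := ltn_ord r; have := ltn_ord r'; have := ltn_ord j1; have := ltn_ord j2.
move=> lt_j2 lt_j1 lt_r' lt_r.
have [lt_j [succ_j1 | succ_j2]] :
  0 < j < n /\ (j1 = j.+1 :> nat \/ j2 = j.+1 :> nat) by lia.
- split=> //; apply/imsetP; exists (r, j1) => //.
  by apply: ord_inj; rewrite /= inordK; lia.
- split=> //; apply/imsetP; exists (r', j2) => //.
  by apply: ord_inj; rewrite /= inordK; lia.
Qed.

Lemma half_le_card_of_gaps n (A : {set 'I_n.+1}) :
  (forall j : 'I_n.+1, j \notin A -> 0 < j < n /\ inord j.+1 \in A) ->
  (n.+1 + 2) %/ 2 <= #|A|.
Proof.
move=> gapA; have A0 : ord0 \in A by apply: contraT => /gapA [].
pose succ (j : 'I_n.+1) : 'I_n.+1 := inord j.+1.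
have succ_inj : {in ~: A &, injective succ}.
  move=> j k; rewrite !inE => /gapA [/andP [_ lt_j] _] /gapA [/andP [_ lt_k] _].
  by move/(congr1 val); rewrite /= !inordK ?ltnS // => /succn_inj /val_inj.
have succ_sub : (succ @: ~: A) \subset A :\ ord0.
  apply/subsetP => x /imsetP [j]; rewrite inE.
  move=> /gapA [/andP [_ lt_j] succ_j] ->.
  by rewrite !inE succ_j andbT -val_eqE /= inordK ?ltnS.
have := subset_leq_card succ_sub; rewrite card_in_imset //.
have : #|~: A| + #|A| = n.+1 by rewrite addnC cardsC card_ord.
rewrite (cardsD1 ord0 A) A0 /=; set gaps := #|~: A|; set rest := #|A :\ ord0|.
lia.
Qed.

Lemma grid2_indep_dom_card_ge n (S : {set 'I_2 * 'I_n.+1}) :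
  independent (@grid_adj 2 _) S -> dominating (@grid_adj 2 _) S ->
  (n.+1 + 2) %/ 2 <= #|S|.
Proof.
move=> indS domS; rewrite -card_grid2_columns //.
by apply: half_le_card_of_gaps => j; apply: missed_column_gap.
Qed.

Lemma grid2_has_nbr n (P : nat -> nat -> bool) (v : 'I_2 * 'I_n.+1) :
  [|| P (1 - v.1) v.2, (0 < v.2) && P v.1 v.2.-1 | (v.2 < n) && P v.1 v.2.+1] ->
  exists2 u : 'I_2 * 'I_n.+1, P u.1 u.2 & grid_adj v u.
Proof.
case: v => r j /=; have := ltn_ord r; have := ltn_ord j => lt_j lt_r.
case/or3P => [Pv | /andP [j_gt0 Pl] | /andP [j_lt Pr]].
- by exists (inord (1 - r), j); rewrite /= ?grid_adjE /= inordK //; lia.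
- by exists (r, inord j.-1); rewrite /= ?grid_adjE /= inordK //; lia.
- by exists (r, inord j.+1); rewrite /= ?grid_adjE /= inordK //; lia.
Qed.

Lemma grid2_nbrs_le2 n (S : {set 'I_2 * 'I_n}) :
  {in S &, forall u w : 'I_2 * 'I_n, u.1 = w.1 -> (u.2 : nat).+2 != w.2} ->
  forall v, nbrs_in (@grid_adj 2 n) S v <= 2.
Proof.
move=> no_gap2 [a b]; have := ltn_ord a => lt_a.
rewrite /nbrs_in -(cardsID [set u : 'I_2 * 'I_n | u.1 == a :> nat]).
apply: (@leq_add _ _ 1 1); apply/card_le1_eqP => -[r j] [r' j'].
all: rewrite !inE /= !grid_adjE /=.
- move=> /andP [/andP [uS adj_u] /eqP/ord_inj r_a].
  move=> /andP [/andP [wS adj_w] /eqP/ord_inj r'_a].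
  subst r r'; have := no_gap2 _ _ uS wS erefl; have := no_gap2 _ _ wS uS erefl.
  by rewrite /= => gap_wu gap_uw; congr pair; apply: ord_inj; lia.
- move=> /and3P [r_a uS adj_u] /and3P [r'_a wS adj_w].
  have := ltn_ord r; have := ltn_ord r' => lt_r' lt_r.
  by congr pair; apply: ord_inj; lia.
Qed.

Section Zigzag.
Variable n : nat.

(* Column j is used when it is even or the last one (j = n), in row
   (j + 1) / 2 mod 2, which reads 0, 1, 1, 0 for j = 0, 1, 2, 3 mod 4. *)
Definition zig (r j : nat) : bool :=
  ((j %% 2 == 0) || (j == n)) && (r == j.+1 %/ 2 %% 2).

Definition zigzag : {set 'I_2 * 'I_n.+1} :=
  [set v : 'I_2 * 'I_n.+1 | zig v.1 v.2].

Lemma zigzag_independent : independent (@grid_adj 2 n.+1) zigzag.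
Proof.
apply/independentP => -[r j] [r' j']; rewrite !inE /zig grid_adjE /=.
by have := ltn_ord j; have := ltn_ord j'; lia.
Qed.

Lemma zigzag_dominating : dominating (@grid_adj 2 n.+1) zigzag.
Proof.
apply/dominatingP => -[r j]; rewrite inE => zig_v.
have [u zig_u vu] : exists2 u : 'I_2 * 'I_n.+1, zig u.1 u.2 & grid_adj (r, j) u.
  apply: grid2_has_nbr; move: zig_v; rewrite /zig /=.
  by have := ltn_ord r; have := ltn_ord j; lia.
by exists u; rewrite ?inE.
Qed.

Lemma zigzag_no_gap2 :
  {in zigzag &, forall u w : 'I_2 * 'I_n.+1,
    u.1 = w.1 -> (u.2 : nat).+2 != w.2}.
Proof.
move=> [r j] [r' j']; rewrite !inE /zig /= => zig_u zig_w eq_r; subst r'.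
by move: zig_u zig_w; have := ltn_ord j'; lia.
Qed.

Lemma zigzag_indep12 : indep12 (@grid_adj 2 n.+1) zigzag.
Proof.
apply: indep12_intro zigzag_independent zigzag_dominating _ => v _.
exact: grid2_nbrs_le2 zigzag_no_gap2 v.
Qed.

Lemma zigzag_card_le : #|zigzag| <= (n.+1 + 2) %/ 2.
Proof.
pose vertex (k : nat) : 'I_2 * 'I_n.+1 := (inord (k %% 2), inord (minn k.*2 n)).
have sub : zigzag \subset [set vertex k | k : 'I_((n.+1 + 2) %/ 2)].
  apply/subsetP => -[r j]; rewrite inE /zig /= => zig_v.
  have := ltn_ord r; have := ltn_ord j => lt_j lt_r.
  have lt_k : j.+1 %/ 2 < (n.+1 + 2) %/ 2 by lia.
  apply/imsetP; exists (Ordinal lt_k) => //.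
  by congr pair; apply: ord_inj; rewrite /= inordK; lia.
apply: leq_trans (subset_leq_card sub) _.
by rewrite (leq_trans (leq_imset_card _ _)) ?card_ord.
Qed.

End Zigzag.

Theorem mainTheorem3 (n : nat) (hn : 2 <= n) :
  indep12_number_is (@grid_adj 2 n) ((n + 2) %/ 2).
Proof.
case: n hn => [//|n] _.
have lower S : indep12 (@grid_adj 2 n.+1) S -> (n.+1 + 2) %/ 2 <= #|S|.
  by case/and3P=> indS domS _; apply: grid2_indep_dom_card_ge.
split; last exact: lower.
exists (zigzag n); split; first exact: zigzag_indep12.
by apply/eqP; rewrite eqn_leq zigzag_card_le lower ?zigzag_indep12.
Qed.
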